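(* There is a constant $C$ depending only on $n$ such that: if $A\in gl(n,\mathbb{C})$ is a nonzero block diagonal nilpotent matrix each of whose diagonal blocks is in reduced column echelon form, then there exists $S\in Gl(n,\mathbb{C})$ with $\|S^{\pm1}\|\le C(1+\|A\|)^{n!}$ such that $S^{-1}AS$ is in Jordan normal form; moreover $S$ is block diagonal with the same block decomposition as $A$.
   Context: $\|\cdot\|$ is the operator norm. The length of a nonzero column is the row index of its last nonzero entry. A matrix is in column echelon form if column lengths are strictly increasing except for the first columns which may be zero; its pivots are the last nonzero coefficients of its nonzero columns; reduced column echelon form means column echelon form with all pivots equal to $1$. *)

From HB Require Import structures.
From mathcomp Require Import all_boot all_order all_algebra.
From mathcomp Require Import complex.
From mathcomp Require Import classical_sets reals.
Set Implicit Arguments. Unset Strict Implicit. Unset Printing Implicit Defensive.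
Import Order.TTheory GRing.Theory Num.Theory.
Local Open Scope ring_scope.

Section Defs.
Variable R : realType.
Local Notation C := (complex R).

Definition vnorm (m : nat) (x : 'cV[C]_m) : R :=
  Num.sqrt (\sum_(i < m) (Normc.normc (x i 0)) ^+ 2).

Definition opnorm (m : nat) (M : 'M[C]_m) : R :=
  sup [set vnorm (M *m x) | x in [set x : 'cV[C]_m | vnorm x <= 1]]%classic.

Definition is_nilpotent (m : nat) (M : 'M[C]_m) : Prop :=
  exists k : nat, M ^+ k = 0.

(* Row i is the length of column j (i.e. the row index of its last nonzero
   entry); M i j is then the pivot of column j. *)
Definition is_last_nonzero (m : nat) (M : 'M[C]_m) (i j : 'I_m) : Prop :=
  M i j != 0 /\ forall i' : 'I_m, (i < i')%N -> M i' j = 0.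

Definition col_echelon (m : nat) (M : 'M[C]_m) : Prop :=
  exists p : nat,
    (forall j : 'I_m, (j < p)%N -> col j M = 0) /\
    (forall j : 'I_m, (p <= j)%N -> col j M != 0) /\
    (forall (j j' i i' : 'I_m), (j < j')%N ->
        is_last_nonzero M i j -> is_last_nonzero M i' j' -> (i < i')%N).

Definition reduced_col_echelon (m : nat) (M : 'M[C]_m) : Prop :=
  col_echelon M /\
  forall i j : 'I_m, is_last_nonzero M i j -> M i j = 1.

Definition jordan_block (lam : C) (m : nat) : 'M[C]_m :=
  \matrix_(i < m, j < m)
     (if i == j then lam else if (j == i.+1 :> nat) then 1 else 0).

Definition jordan_form (m : nat) (M : 'M[C]_m) : Prop :=
  exists (k : nat) (q : 'I_k -> nat) (lam : 'I_k -> C)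
         (E : (\sum_(i < k) q i)%N = m),
    M = castmx (E, E) (@mxdiag _ _ q (fun i => jordan_block (lam i) (q i))).

End Defs.

From HB Require Import structures.
From mathcomp Require Import all_boot all_order all_algebra.
From mathcomp Require Import complex.
From mathcomp Require Import classical_sets reals.
From mathcomp Require Import zify.
From mathcomp Require Import fingroup perm.
Import Order.TTheory GRing.Theory Num.Theory.
Set Implicit Arguments. Unset Strict Implicit. Unset Printing Implicit Defensive.

(* A nilpotent block M in reduced column echelon form is upper triangular with
   zero diagonal, so the pivot of a nonzero column x lies in a row pivot x < x,
   and pivot is injective.  Put v_y := M v_x when y = pivot x, and v_y := e_y
   when y is not a pivot.  The v_y are unitriangular, hence the columns of an
   invertible W, and M W = W J where J is the 0/1 matrix of the pivot map;
   listing the basis chain by chain turns J into a direct sum of nilpotent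
   Jordan blocks.  If the entries of M are bounded by c >= 1, each v_y is
   M^d e_r with d < n, so the entries of W are at most (n c)^(n-1), and
   W^-1 = sum_(e < n) (1 - W)^e has entries O(c^((n-1)^2)).  The entries of
   every block are bounded by 1 + ||A||, and (n-1)^2 <= n!. *)

Section Chains.
Variable F : nat -> option nat.

Definition chained (s : seq nat) :=
  forall c x, c < size s -> F (nth 0 s c) = Some x -> 0 < c /\ x = nth 0 s c.-1.

Lemma chained_rcons s m : F m = None -> chained s -> chained (rcons s m).
Proof.
move=> Fm chs c x; rewrite size_rcons ltnS leq_eqVlt nth_rcons.
case/orP=> [/eqP ->|ltcs]; first by rewrite ltnn eqxx Fm.
rewrite ltcs => /chs-/(_ ltcs) [c_gt0 ->]; split=> //.
by rewrite nth_rcons (leq_ltn_trans (leq_pred c) ltcs).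
Qed.

(* [m] is inserted right after its predecessor [x]; the element that followed *)
(* [x] cannot have [x] as predecessor, since [m] is the only one.            *)
Lemma chained_insert (s : seq nat) (m x : nat) :
  F m = Some x -> x \in s -> (forall y, y \in s -> F y != Some x) -> chained s ->
  chained (take (index x s).+1 s ++ m :: drop (index x s).+1 s).
Proof.
move=> Fm xs Fs_x chs.
have i_lt : index x s < size s by rewrite index_mem.
have nth_i : nth 0 s (index x s) = x by rewrite nth_index.
set i := index x s in i_lt nth_i *; clearbody i; set s' := _ ++ _.
have nthE c : nth 0 s' c =
    if c <= i then nth 0 s c else if c == i.+1 then m else nth 0 s c.-1.
  rewrite /s' nth_cat size_take_min (minn_idPl i_lt) ltnS.
  case: leqP => [c_le|c_gt]; first by rewrite nth_take.
  case: eqP => [->|c_ne]; first by rewrite subnn.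
  rewrite -[c - _]prednK /=; last lia.
  by rewrite nth_drop; congr nth; lia.
move=> c y; rewrite size_cat size_take_min (minn_idPl i_lt) /= size_drop nthE.
have [c_le _|c_gt] := leqP c i.
  move=> /chs-/(_ (leq_ltn_trans c_le i_lt)) [c_gt0 ->]; split=> //.
  by rewrite nthE (leq_trans (leq_pred c) c_le).
case: eqP => [c_eq _|c_ne lt_c].
  by rewrite Fm c_eq => -[<-]; rewrite nthE leqnn nth_i.
have c1_lt : c.-1 < size s by lia.
move=> Fy; have [c1_gt0 y_eq] := chs _ _ c1_lt Fy; split; first lia.
rewrite nthE ifN; last lia.
case: eqP => [c1_eq|_]; last by [].
by have := Fs_x _ (mem_nth 0 c1_lt); rewrite Fy y_eq c1_eq /= nth_i eqxx.
Qed.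

Lemma chained_perm_iota m :
  (forall j x, j < m -> F j = Some x -> x < j) ->
  (forall j j' x, j < m -> j' < m -> F j = Some x -> F j' = Some x -> j = j') ->
  exists2 s, perm_eq s (iota 0 m) & chained s.
Proof.
elim: m => [|m IH] F_lt F_inj; first by exists [::].
have [s s_iota chs] : exists2 s, perm_eq s (iota 0 m) & chained s.
  apply: IH => [j x j_lt|j j' x j_lt j'_lt]; first exact: F_lt (ltnW j_lt).
  exact: F_inj (ltnW j_lt) (ltnW j'_lt).
have rcons_iota : perm_eq (rcons s m) (iota 0 m.+1).
  by rewrite -addn1 iotaD -cats1 perm_cat2r.
case Fm: (F m) => [x|]; last by exists (rcons s m); last exact: chained_rcons.
have xs : x \in s by rewrite (perm_mem s_iota) mem_iota add0n (F_lt m).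
exists (take (index x s).+1 s ++ m :: drop (index x s).+1 s).
  apply: perm_trans rcons_iota; rewrite -cats1 -cat1s perm_catCA cat_take_drop.
  by rewrite perm_catC.
apply: chained_insert => // y ys; apply/eqP => Fy.
have y_lt : y < m by move: ys; rewrite (perm_mem s_iota) mem_iota.
by have := F_inj y m x (ltnW y_lt) (ltnSn m) Fy Fm; lia.
Qed.

End Chains.

Lemma perm_consecutive_chains m (f : 'I_m -> option 'I_m) :
  (forall j x, f j = Some x -> x < j) ->
  (forall j j' x, f j = Some x -> f j' = Some x -> j = j') ->
  exists s : 'S_m, forall c a, f (s c) = Some (s a) -> c = a.+1 :> nat.
Proof.
move=> f_lt f_inj.
pose F j := if insub j is Some jo then omap val (f jo) else None.
have FE (j : 'I_m) : F j = omap val (f j) by rewrite /F valK.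
have [s s_iota chs] : exists2 s, perm_eq s (iota 0 m) & chained F s.
  apply: chained_perm_iota => [j x j_lt|j j' x j_lt j'_lt].
    by rewrite -[j]/(val (Ordinal j_lt)) FE; case E: f => [y|] //= [<-]; exact: f_lt E.
  rewrite -[j]/(val (Ordinal j_lt)) -[j']/(val (Ordinal j'_lt)) !FE.
  case E: f => [y|] //; case E': f => [y'|] //= [<-] [/val_inj y_eq].
  by rewrite y_eq in E'; have := f_inj _ _ _ E E' => -[].
have size_s : size s = m by rewrite (perm_size s_iota) size_iota.
have uniq_s : uniq s by rewrite (perm_uniq s_iota) iota_uniq.
have s_lt c : c < m -> nth 0 s c < m.
  move=> c_lt; have : nth 0 s c \in iota 0 m by rewrite -(perm_mem s_iota) mem_nth ?size_s.
  by rewrite mem_iota.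
pose g (c : 'I_m) : 'I_m := Ordinal (s_lt c (ltn_ord c)).
have g_inj : injective g.
  by move=> c c' /(congr1 val) /= /eqP; rewrite nth_uniq ?size_s // => /eqP/val_inj.
exists (perm g_inj) => c a; rewrite !permE => fgc.
have c_lt : c < size s by rewrite size_s.
have Fc : F (nth 0 s c) = Some (val (g a)) by rewrite -[nth 0 s c]/(val (g c)) FE fgc.
have [c_gt0 ga] := chs c _ c_lt Fc.
have c1_lt : c.-1 < m by rewrite (leq_ltn_trans (leq_pred c)).
move/eqP: ga; rewrite nth_uniq ?size_s // => /eqP ->.
by rewrite prednK.
Qed.

Local Open Scope ring_scope.

Lemma ler_term_sum (R : numDomainType) (I : finType) (F : I -> R) i :
  (forall j, 0 <= F j) -> F i <= \sum_j F j.
Proof. by move=> F_ge0; rewrite (bigD1 i) //= lerDl sumr_ge0. Qed.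

Section EntryBounds.
Variable R : realType.
Local Notation C := (complex R).
Local Notation normc := (@Normc.normc R).

Lemma normc_ge0 (x : C) : 0 <= normc x.
Proof. by case: x => a b; apply: sqrtr_ge0. Qed.

Lemma normc_sum (I : finType) (F : I -> C) : normc (\sum_i F i) <= \sum_i normc (F i).
Proof.
elim/big_ind2: _ => [|x1 y1 x2 y2 le1 le2|//]; first by rewrite Normc.normc0.
by apply: le_trans (le_normcD _ _) _; apply: lerD.
Qed.

Definition mxbounded m n (X : 'M[C]_(m, n)) (b : R) := forall i j, normc (X i j) <= b.

Lemma mxbounded_le m n (X : 'M[C]_(m, n)) b b' :
  mxbounded X b -> b <= b' -> mxbounded X b'.
Proof. by move=> Xb le_b i j; apply: le_trans (Xb i j) le_b. Qed.

Lemma mxbounded_mul m n p (X : 'M[C]_(m, n)) (Y : 'M[C]_(n, p)) b c :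
  mxbounded X b -> mxbounded Y c -> mxbounded (X *m Y) (n%:R * b * c).
Proof.
move=> Xb Yc i j; rewrite mxE; apply: le_trans (normc_sum _) _.
rewrite -mulrA mulr_natl -[X in _ *+ X](card_ord n) -sumr_const.
apply: ler_sum => l _.
by rewrite Normc.normcM ler_pM ?normc_ge0.
Qed.

Lemma mxbounded_delta m n (i0 : 'I_m) (j0 : 'I_n) : mxbounded (delta_mx i0 j0) 1.
Proof.
by move=> i j; rewrite mxE; case: (_ && _); rewrite ?Normc.normc1 ?Normc.normc0.
Qed.

Lemma mxbounded1 m : mxbounded (1%:M : 'M[C]_m) 1.
Proof.
by move=> i j; rewrite mxE; case: eqP; rewrite ?Normc.normc1 ?Normc.normc0.
Qed.

Lemma mxbounded_exp m (X : 'M[C]_m) b e :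
  mxbounded X b -> mxbounded (X ^+ e) ((m%:R * b) ^+ e).
Proof.
move=> Xb; elim: e => [|e IH]; first exact: mxbounded1.
rewrite exprSr -mulmxE; apply: mxbounded_le (mxbounded_mul IH Xb) _.
by rewrite exprSr mulrCA mulrA.
Qed.

Lemma mxbounded_sum m n (I : finType) (F : I -> 'M[C]_(m, n)) (b : I -> R) :
  (forall e, mxbounded (F e) (b e)) -> mxbounded (\sum_e F e) (\sum_e b e).
Proof.
move=> Fb i j; rewrite summxE; apply: le_trans (normc_sum _) _.
by apply: ler_sum => e _; apply: Fb.
Qed.

Lemma sqrt_sum_sqr_le_sum m (a : 'I_m -> R) : (forall i, 0 <= a i) ->
  Num.sqrt (\sum_i a i ^+ 2) <= \sum_i a i.
Proof.
move=> a_ge0; have sum_ge0 : 0 <= \sum_i a i by apply: sumr_ge0.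
rewrite -(ger0_norm sum_ge0) -sqrtr_sqr ler_wsqrtr // expr2 big_distrl /=.
by apply: ler_sum => i _; rewrite expr2 ler_wpM2l // ler_term_sum.
Qed.

Lemma vnorm_ge_entry m (x : 'cV[C]_m) i : normc (x i 0) <= vnorm x.
Proof.
rewrite -(ger0_norm (normc_ge0 _)) -sqrtr_sqr ler_wsqrtr //.
by apply: ler_term_sum => j; apply: sqr_ge0.
Qed.

Lemma vnorm_delta m (j : 'I_m) : vnorm (delta_mx j 0 : 'cV[C]_m) = 1.
Proof.
rewrite /vnorm (bigD1 j) //= big1 ?addr0 => [|l /negbTE l_ne].
  by rewrite mxE !eqxx Normc.normc1 expr1n sqrtr1.
by rewrite mxE l_ne Normc.normc0 expr0n.
Qed.

Lemma vnorm0 m : vnorm (0 : 'cV[C]_m) = 0.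
Proof. by rewrite /vnorm big1 ?sqrtr0 // => i _; rewrite mxE Normc.normc0 expr0n. Qed.

Lemma mxbounded_sum_normc m n (X : 'M[C]_(m, n)) :
  mxbounded X (\sum_i \sum_j normc (X i j)).
Proof.
move=> i j; apply: le_trans (ler_term_sum _ _) (ler_term_sum _ _) => *.
  exact: normc_ge0.
by apply: sumr_ge0 => *; apply: normc_ge0.
Qed.

Section OperatorNorm.
Variables (m : nat) (X : 'M[C]_m).

Let image_unit_ball :=
  [set vnorm (X *m x) | x in [set x : 'cV[C]_m | vnorm x <= 1]]%classic.

Lemma image_unit_ball_ub b : mxbounded X b -> ubound image_unit_ball ((m * m)%:R * b).
Proof.
move=> Xb _ [x /= x_le1 <-].
apply: le_trans (sqrt_sum_sqr_le_sum (fun i => normc_ge0 _)) _.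
rewrite natrM -mulrA mulr_natl -[X in _ *+ X](card_ord m) -sumr_const.
apply: ler_sum => i _.
have xb : mxbounded x 1.
  by move=> j k; rewrite ord1; apply: le_trans (vnorm_ge_entry x j) x_le1.
by have := mxbounded_mul Xb xb i 0; rewrite mulr1.
Qed.

Lemma has_sup_image_unit_ball : has_sup image_unit_ball.
Proof.
split; first by exists (vnorm (X *m 0)), 0; rewrite //= vnorm0.
by eexists; apply/image_unit_ball_ub/mxbounded_sum_normc.
Qed.

Lemma opnorm_le_mxbounded b : mxbounded X b -> opnorm X <= (m * m)%:R * b.
Proof. by move=> Xb; apply/ge_sup/image_unit_ball_ub; case: has_sup_image_unit_ball. Qed.

Lemma opnorm_ge0 : 0 <= opnorm X.
Proof.
have : image_unit_ball (vnorm (X *m 0)) by exists 0; rewrite //= vnorm0.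
by move/(sup_upper_bound has_sup_image_unit_ball); rewrite mulmx0 vnorm0.
Qed.

Lemma mxbounded_opnorm : mxbounded X (opnorm X).
Proof.
move=> i j; have : image_unit_ball (vnorm (X *m delta_mx j 0)).
  by exists (delta_mx j 0); rewrite //= vnorm_delta.
move/(sup_upper_bound has_sup_image_unit_ball); apply: le_trans.
by have := vnorm_ge_entry (X *m delta_mx j 0) i; rewrite -colE mxE.
Qed.

End OperatorNorm.

End EntryBounds.

Section MxDiag.
Variables (K : pzSemiRingType) (k : nat) (p : 'I_k -> nat).

Lemma mxdiag_mul (X Y : forall i, 'M[K]_(p i)) :
  mxdiag X *m mxdiag Y = mxdiag (fun i => X i *m Y i).
Proof.
rewrite [mxdiag Y]/mxdiag mul_mxdiag_mxblock /mxdiag; apply: eq_mxblock => i j.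
by case: eqP => [<-|_]; rewrite ?mulmx0 ?conform_mx_id.
Qed.

Lemma mxdiagX (X : forall i, 'M[K]_(p i)) e :
  mxdiag X ^+ e = mxdiag (fun i => X i ^+ e) :> 'M_(\sum_i p i).
Proof.
elim: e => [|e IH]; first by rewrite expr0; under eq_mxdiag do rewrite expr0; rewrite mxdiagZ.
by rewrite exprS IH -mulmxE mxdiag_mul; apply: eq_mxdiag => i; rewrite exprS.
Qed.

Lemma mxdiag_RankE (X : forall i, 'M[K]_(p i)) i (a b : 'I_(p i)) :
  mxdiag X (tagnat.Rank i a) (tagnat.Rank i b) = X i a b.
Proof. by have /matrixP/(_ a b) := submxblock_diag X i; rewrite mxE. Qed.

Lemma mxdiag_entry (X : forall i, 'M[K]_(p i)) (s t : 'I_(\sum_i p i)) :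
  mxdiag X s t = 0 \/ exists i (a b : 'I_(p i)),
     [/\ s = tagnat.Rank i a, t = tagnat.Rank i b & mxdiag X s t = X i a b].
Proof.
rewrite -(tagnat.sig2K s) -(tagnat.sig2K t).
have [e|ne] := eqVneq (tagnat.sig1 s) (tagnat.sig1 t); last first.
  left; have := mxblockK (fun i j => if i == j then conform_mx 0 (X i) else 0 : 'M_(p i, p j))
    (tagnat.sig1 s) (tagnat.sig1 t).
  by rewrite (negbTE ne) => /matrixP /(_ (tagnat.sig2 s) (tagnat.sig2 t)); rewrite !mxE.
right; move: (tagnat.sig2 s) (tagnat.sig2 t); rewrite -e => a b.
by exists (tagnat.sig1 s), a, b; rewrite mxdiag_RankE.
Qed.

End MxDiag.

Lemma mxdiag_inv (K : comUnitRingType) k (p : 'I_k -> nat) (X Y : forall i, 'M[K]_(p i)) :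
  (forall i, Y i *m X i = 1%:M) -> mxdiag X \in unitmx /\ invmx (mxdiag X) = mxdiag Y.
Proof.
move=> YX; have YX1 : mxdiag Y *m mxdiag X = 1%:M.
  by rewrite mxdiag_mul -mxdiagZ; apply: eq_mxdiag.
have X_unit : mxdiag X \in unitmx by case/mulmx1_unit: (mulmx1C YX1).
by split=> //; rewrite -[LHS]mul1mx -YX1 mulmxK.
Qed.

Section Superdiagonal.
Variable R : realType.
Local Notation C := (complex R).

Definition superdiag01 m (M : 'M[C]_m) :=
  forall i j : 'I_m, M i j != 0 -> j = i.+1 :> nat /\ M i j = 1.

Definition nilpotent_jordan_form m (M : 'M[C]_m) :=
  exists k (q : nat -> nat) (E : (\sum_(i < k) q i)%N = m),
    M = castmx (E, E) (mxdiag (fun i : 'I_k => jordan_block 0 (q i))).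

Lemma superdiag01_mxdiag k (p : 'I_k -> nat) (X : forall i, 'M[C]_(p i)) :
  (forall i, superdiag01 (X i)) -> superdiag01 (mxdiag X).
Proof.
move=> Xsd s t; have [->|[i [a [b [-> -> ->]]]]] := mxdiag_entry X s t.
  by rewrite eqxx.
by case/Xsd=> ab -> ; rewrite !tagnat.RankEsum ab addnS.
Qed.

Section FirstBlock.
Variables (m' d : nat) (M : 'M[C]_m'.+1).

Let tail_lt (a : 'I_(m' - d)) : (d.+1 + a < m'.+1)%N.
Proof. by have := ltn_ord a; lia. Qed.

Definition superdiag_tail : 'M[C]_(m' - d) :=
  \matrix_(a, b) M (Ordinal (tail_lt a)) (Ordinal (tail_lt b)).

Hypothesis Msd : superdiag01 M.

Lemma superdiag01_tail : superdiag01 superdiag_tail.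
Proof. by move=> a b; rewrite mxE => /Msd [/= ab ->]; split=> //; lia. Qed.

Hypothesis d_le : (d <= m')%N.
Hypothesis M_chain : forall i, (i < d)%N -> M (inord i) (inord i.+1) = 1.
Hypothesis M_break : (d < m')%N -> M (inord d) (inord d.+1) = 0.

Lemma jordan_first_block k (q : nat -> nat) (E : (\sum_(i < k) q i)%N = (m' - d)%N) :
  superdiag_tail = castmx (E, E) (mxdiag (fun i : 'I_k => jordan_block 0 (q i))) ->
  nilpotent_jordan_form M.
Proof.
move=> tailE; pose q' (j : nat) : nat := if j is j'.+1 then q j' else d.+1.
have E' : (\sum_(i < k.+1) q' i)%N = m'.+1.
  by rewrite big_ord_recl /=; under eq_bigr do rewrite add0n; rewrite E; lia.
exists k.+1, q', E'; apply/matrixP => i j.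
rewrite castmxE mxdiag_recl castmxE /= /block_mx !mxE.
have inordE (x : 'I_m'.+1) : inord x = x by rewrite inord_val.
case: splitP => a /= ia; rewrite mxE; case: splitP => b /= jb; rewrite ?mxE.
- have [Mij0|/Msd [ji ->]] := eqVneq (M i j) 0; last first.
    by rewrite ifN ?ifT //=; [lia | apply/eqP => /(congr1 val) /=; lia].
  rewrite Mij0; case: eqP => // _; case: eqP => // ba.
  have i_lt : (i < d)%N by have := ltn_ord b; lia.
  have := M_chain i_lt; rewrite inordE.
  have -> : inord i.+1 = j by apply: val_inj; rewrite /= inordK; lia.
  by rewrite Mij0 => /eqP; rewrite eq_sym oner_eq0.
- apply/eqP; apply: contraT => Mij; have [ji _] := Msd Mij.
  have d_lt : (d < m')%N by have := ltn_ord j; have := ltn_ord a; lia.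
  have [iE jE] : i = inord d /\ j = inord d.+1.
    by split; apply: val_inj; rewrite /= inordK; have := ltn_ord a; lia.
  by rewrite iE jE M_break ?eqxx in Mij.
- by apply/eqP; apply: contraT => /Msd [ji _]; have := ltn_ord b; lia.
- transitivity (superdiag_tail (cast_ord E a) (cast_ord E b)).
    by rewrite mxE; congr (M _ _); apply: val_inj => /=; rewrite -?ia -?jb.
  by rewrite tailE castmxE !cast_ordK mxE.
Qed.

End FirstBlock.

Lemma superdiag01_nilpotent_jordan m (M : 'M[C]_m) : superdiag01 M -> nilpotent_jordan_form M.
Proof.
elim: m {-2}m (leqnn m) M => [|N IH] [|m'] // m_le M Msd;
  try by exists 0%N, (fun=> 0%N), (big_ord0 _ _ _ _); apply/matrixP => -[].
(* The first Jordan block ends at the first break [d] of the superdiagonal. *)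
pose P d := (d == m') || (M (inord d) (inord d.+1) == 0).
have P_m' : P m' by rewrite /P eqxx.
have [d Pd d_min] := ex_minnP (ex_intro P m' P_m').
have d_le : (d <= m')%N := d_min m' P_m'.
have tail_le : (m' - d <= N)%N by lia.
have [k [q [E tailE]]] := IH _ tail_le _ (superdiag01_tail (d := d) Msd).
apply: jordan_first_block tailE => // [i i_lt|d_lt].
  have : ~~ P i by apply/negP => /d_min; lia.
  by rewrite negb_or => /andP [_ /Msd []].
by apply/eqP; move: Pd; rewrite /P (ltn_eqF d_lt).
Qed.

End Superdiagonal.

Lemma superdiag01_perm_shift (R : realType) m (f : 'I_m -> option 'I_m) :
  (forall j x, f j = Some x -> (x < j)%N) ->
  (forall j j' x, f j = Some x -> f j' = Some x -> j = j') ->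
  exists s : 'S_m,
    superdiag01 (row_perm s (col_perm s (\matrix_(y, x) (f x == Some y)%:R : 'M[complex R]_m))).
Proof.
move=> f_lt f_inj; have [s s_chain] := perm_consecutive_chains f_lt f_inj.
exists s => a c; rewrite !mxE.
by have [/s_chain|] := eqVneq (f (s c)) (Some (s a)); last rewrite eqxx.
Qed.

Lemma superdiag01_jordan_form (R : realType) m (M : 'M[complex R]_m) :
  superdiag01 M -> jordan_form M.
Proof.
by case/superdiag01_nilpotent_jordan => k [q [E ->]]; exists k, (fun i => q i), (fun=> 0), E.
Qed.

Section Triangular.
Variables (K : pzRingType) (m : nat).
Implicit Types (M N : 'M[K]_m).

Definition upper_trig M := forall i j : 'I_m, (j < i)%N -> M i j = 0.

Lemma upper_trig_exp_lower M e (i j : 'I_m) :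
  upper_trig M -> (j < i)%N -> (M ^+ e) i j = 0.
Proof.
move=> Mup; elim: e i j => [|e IH] i j ji.
  by rewrite mxE; case: eqP ji => // ->; rewrite ltnn.
rewrite exprSr -mulmxE mxE big1 // => l _.
by have [li|il] := ltnP l i; [rewrite IH ?mul0r | rewrite Mup ?mulr0 // (leq_trans ji il)].
Qed.

Lemma upper_trig_exp_diag M e (j : 'I_m) : upper_trig M -> (M ^+ e) j j = M j j ^+ e.
Proof.
move=> Mup; elim: e => [|e IH]; first by rewrite mxE eqxx.
rewrite exprSr -mulmxE mxE (bigD1 j) //= IH big1 ?addr0 ?exprSr // => l /negPf lj.
have [lt_lj|lt_jl|/val_inj l_j] := ltngtP l j; last by rewrite l_j eqxx in lj.
  by rewrite upper_trig_exp_lower ?mul0r.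
by rewrite Mup ?mulr0.
Qed.

Lemma strictly_upper_nilpotent N :
  (forall i j : 'I_m, (j <= i)%N -> N i j = 0) -> N ^+ m = 0.
Proof.
move=> Nup; suff N_low e (i j : 'I_m) : (j < i + e)%N -> (N ^+ e) i j = 0.
  by apply/matrixP => i j; rewrite N_low ?mxE //; have := ltn_ord j; lia.
elim: e i j => [|e IH] i j ji; first by rewrite mxE; case: eqP ji => // ->; rewrite addn0 ltnn.
rewrite exprSr -mulmxE mxE big1 // => l _.
have [l_lt|l_ge] := ltnP l (i + e); first by rewrite IH ?mul0r.
by rewrite Nup ?mulr0 //; lia.
Qed.

Lemma nilpotent_subr_inv N : N ^+ m = 0 -> (1%:M - N) *m \sum_(e < m) N ^+ e = 1%:M.
Proof.
move=> Nm0; have := subrX1 N m; rewrite Nm0 sub0r => /(congr1 -%R).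
by rewrite opprK -mulNr opprB mulmxE => <-.
Qed.

End Triangular.

Lemma upper_trig_nilpotent_diag (K : idomainType) m (M : 'M[K]_m) e (j : 'I_m) :
  upper_trig M -> M ^+ e = 0 -> M j j = 0.
Proof.
move=> Mup Me0; have := upper_trig_exp_diag e j Mup.
by rewrite Me0 mxE => /esym/eqP; rewrite expf_eq0 => /andP [_ /eqP].
Qed.

Section Pivots.
Variable R : realType.
Local Notation C := (complex R).
Variables (m : nat) (M : 'M[C]_m).

Definition is_pivot i j :=
  (M i j != 0) && [forall i' : 'I_m, (i < i')%N ==> (M i' j == 0)].

Definition pivot j := [pick i | is_pivot i j].

Lemma is_pivotP i j : reflect (is_last_nonzero M i j) (is_pivot i j).
Proof.
apply: (iffP andP) => [[Mij /forallP Mi'j]|[Mij Mi'j]]; split=> //.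
  by move=> i' ii'; apply/eqP/(implyP (Mi'j i')).
by apply/forallP => i'; apply/implyP => /Mi'j ->.
Qed.

Lemma pivot_None j i : pivot j = None -> M i j = 0.
Proof.
rewrite /pivot; case: pickP => // no_piv _; apply/eqP; apply: contraT => Mij.
have [i0 Mi0j i0_max] := @arg_maxnP _ i (fun i' => M i' j != 0) val Mij.
have /negP[] := no_piv i0; rewrite /is_pivot Mi0j /=.
by apply/forallP => i'; apply/implyP => i0i'; apply: contraTT i0i' => /i0_max; rewrite -leqNgt.
Qed.

Hypothesis Mred : reduced_col_echelon M.

Lemma pivot_Some j i : pivot j = Some i ->
  M i j = 1 /\ forall i' : 'I_m, (i < i')%N -> M i' j = 0.
Proof.
rewrite /pivot; case: pickP => // i' /is_pivotP piv [<-].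
by split; [exact: Mred.2 | exact: piv.2].
Qed.

Lemma pivot_None_le j (j' : 'I_m) i : pivot j = None -> (j' <= j)%N -> M i j' = 0.
Proof.
move=> /pivot_None Mj0 j'j; have [p [zero_cols [nz_cols _]]] := Mred.1.
have jp : (j < p)%N.
  rewrite ltnNge; apply/negP => /nz_cols/eqP[]; apply/matrixP => a b.
  by rewrite !mxE Mj0.
by have /matrixP/(_ i 0) := zero_cols j' (leq_ltn_trans j'j jp); rewrite !mxE.
Qed.

Lemma pivot_mono (j j' i i' : 'I_m) :
  (j < j')%N -> pivot j = Some i -> pivot j' = Some i' -> (i < i')%N.
Proof.
move=> jj'; rewrite /pivot; case: pickP => // a /is_pivotP piv_j [<-].
case: pickP => // a' /is_pivotP piv_j' [<-].
by have [p [_ [_ incr]]] := Mred.1; apply: incr jj' piv_j piv_j'.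
Qed.

Lemma pivot_inj j j' x : pivot j = Some x -> pivot j' = Some x -> j = j'.
Proof.
move=> pj pj'; apply: val_inj; case: (ltngtP j j') => // [jj'|j'j].
  by have := pivot_mono jj' pj pj'; rewrite ltnn.
by have := pivot_mono j'j pj' pj; rewrite ltnn.
Qed.

(* Nonzero columns come last, so every column to the right of [j] has a pivot, *)
(* and these pivots strictly increase.                                       *)
Lemma pivot_shift (j i : 'I_m) t (jt : (j + t < m)%N) :
  pivot j = Some i -> exists2 x, pivot (Ordinal jt) = Some x & (i + t <= x)%N.
Proof.
move=> pj; elim: t jt => [|t IH] jt.
  by exists i; rewrite ?addn0 // -pj; congr pivot; apply: val_inj; rewrite /= addn0.
have jt' : (j + t < m)%N by lia.
have [x px ix] := IH jt'.
case py: (pivot (Ordinal jt)) => [y|]; last first.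
  have := pivot_None_le x py (_ : (Ordinal jt' <= Ordinal jt)%N).
  by rewrite (pivot_Some px).1 /= addnS leqnSn => /(_ isT)/eqP; rewrite oner_eq0.
exists y => //; have := pivot_mono (_ : (Ordinal jt' < Ordinal jt)%N) px py.
by rewrite /= addnS ltnSn => /(_ isT); lia.
Qed.

Lemma pivot_le j i : pivot j = Some i -> (i <= j)%N.
Proof.
have jt : (j + (m.-1 - j) < m)%N by have := ltn_ord j; lia.
by move=> /pivot_shift-/(_ _ jt) [x _]; have := ltn_ord x; have := ltn_ord j; lia.
Qed.

Lemma red_echelon_upper_trig : upper_trig M.
Proof.
move=> i j ji; case pj: (pivot j) => [x|]; last exact: pivot_None.
by apply: (pivot_Some pj).2; apply: leq_ltn_trans (pivot_le pj) ji.
Qed.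

Hypothesis Mnil : is_nilpotent M.

Lemma pivot_lt j i : pivot j = Some i -> (i < j)%N.
Proof.
move=> pj; rewrite ltn_neqAle pivot_le // andbT; apply/eqP => /val_inj ij.
have [e Me0] := Mnil; have := upper_trig_nilpotent_diag j red_echelon_upper_trig Me0.
by rewrite -{1}ij (pivot_Some pj).1 => /eqP; rewrite oner_eq0.
Qed.

End Pivots.

Section JordanBasis.
Variable R : realType.
Local Notation C := (complex R).
Variables (m : nat) (M : 'M[C]_m).
Hypotheses (Mred : reduced_col_echelon M) (Mnil : is_nilpotent M).

Local Notation pivot := (pivot M).

Definition pivot_col (y : 'I_m) := [pick x | pivot x == Some y].

Lemma pivot_colP x y : (pivot_col y = Some x) <-> (pivot x = Some y).
Proof.
rewrite /pivot_col; case: pickP => [x' /eqP px'|no_col]; last first.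
  by split=> // px; have := no_col x; rewrite px eqxx.
by split=> [[<-] //|px]; congr Some; apply: pivot_inj px' px.
Qed.

(* Recursion on the fuel [e]; as [j < x] whenever [pivot_col j = Some x], *)
(* fuel [m - j] is enough (chain_vec_fuel).                              *)
Fixpoint chain_vec (e : nat) (j : 'I_m) : 'cV[C]_m :=
  if e is e'.+1 then
    if pivot_col j is Some x then M *m chain_vec e' x else delta_mx j 0
  else delta_mx j 0.

Lemma chain_vec_fuel e e' (j : 'I_m) :
  (m - j <= e)%N -> (m - j <= e')%N -> chain_vec e j = chain_vec e' j.
Proof.
elim: e e' j => [|e IH] [|e'] j je je' /=; try by have := ltn_ord j; lia.
case pj: (pivot_col j) => [x|] //; have jx := pivot_lt Mred Mnil ((pivot_colP _ _).1 pj).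
by rewrite (IH e') //; lia.
Qed.

Definition basis_vec j := chain_vec m j.

Lemma basis_vec_pivot (x y : 'I_m) : pivot x = Some y -> basis_vec y = M *m basis_vec x.
Proof.
move=> px; have yx := pivot_lt Mred Mnil px; have := ltn_ord y => y_lt.
have col_y : pivot_col y = Some x by apply/pivot_colP.
rewrite /basis_vec (@chain_vec_fuel m (m - y)) ?leq_subr //.
rewrite -(prednK (_ : 0 < m - y)%N) /= ?subn_gt0 // col_y.
by rewrite (@chain_vec_fuel _ m) //; lia.
Qed.

Definition unitriangular_vec (j : 'I_m) (v : 'cV[C]_m) :=
  (forall i : 'I_m, (j < i)%N -> v i 0 = 0) /\ v j 0 = 1.

Lemma delta_unitriangular j : unitriangular_vec j (delta_mx j 0).
Proof. by split=> [i ji|]; rewrite mxE ?eqxx //; case: eqP ji => // ->; rewrite ltnn. Qed.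

Lemma mul_unitriangular_vec x y v : pivot x = Some y -> unitriangular_vec x v ->
  forall i : 'I_m, (y <= i)%N -> (M *m v) i 0 = M i x.
Proof.
move=> px [v_low v_diag] i yi; rewrite mxE (bigD1 x) //= v_diag mulr1 big1 ?addr0 //.
move=> l /negPf lx; have [l_lt|x_lt|/val_inj l_x] := ltngtP l x; last by rewrite l_x eqxx in lx.
  case pl: (pivot l) => [z|]; last by rewrite pivot_None ?mul0r.
  by rewrite (pivot_Some Mred pl).2 ?mul0r // (leq_trans (pivot_mono Mred l_lt pl px)).
by rewrite v_low ?mulr0.
Qed.

Lemma chain_vec_unitriangular e j : unitriangular_vec j (chain_vec e j).
Proof.
elim: e j => [|e IH] j /=; first exact: delta_unitriangular.
case pj: (pivot_col j) => [x|]; last exact: delta_unitriangular.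
have px := (pivot_colP _ _).1 pj; have Mvx := mul_unitriangular_vec px (IH x).
split=> [i ji|]; last by rewrite Mvx // (pivot_Some Mred px).1.
by rewrite Mvx ?(ltnW ji) // (pivot_Some Mred px).2.
Qed.

Lemma basis_vec_top x : pivot x = None -> M *m basis_vec x = 0.
Proof.
move=> px; apply/matrixP => i k; rewrite ord1 !mxE big1 // => l _.
have [lx|xl] := leqP l x; first by rewrite (pivot_None_le Mred i px lx) mul0r.
by rewrite (chain_vec_unitriangular m x).1 ?mulr0.
Qed.

Definition basis_mx : 'M[C]_m := \matrix_(i, j) basis_vec j i 0.

Definition pivot_mx : 'M[C]_m := \matrix_(y, x) (pivot x == Some y)%:R.

Lemma mulmx_basis : M *m basis_mx = basis_mx *m pivot_mx.
Proof.
apply/matrixP => i x; have -> : (M *m basis_mx) i x = (M *m basis_vec x) i 0.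
  by rewrite !mxE; apply: eq_bigr => l _; rewrite mxE.
rewrite [RHS]mxE; case px: (pivot x) => [y|]; last first.
  by rewrite basis_vec_top // mxE big1 // => y _; rewrite !mxE px mulr0.
rewrite -(basis_vec_pivot px) (bigD1 y) //= big1 ?addr0 => [|z /negPf zy].
  by rewrite !mxE px eqxx mulr1.
by rewrite !mxE px (inj_eq (@Some_inj _)) eq_sym zy mulr0.
Qed.

Lemma basis_mx_strictly_upper (i j : 'I_m) : (j <= i)%N -> (1%:M - basis_mx) i j = 0.
Proof.
have [low diag] := chain_vec_unitriangular m j.
rewrite !mxE /basis_vec leq_eqVlt => /orP [/eqP/val_inj <-|ji]; first by rewrite eqxx diag subrr.
by rewrite low // subr0; case: eqP ji => // ->; rewrite ltnn.
Qed.

Definition basis_inv : 'M[C]_m := \sum_(e < m) (1%:M - basis_mx) ^+ e.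

Lemma basis_invK : basis_inv *m basis_mx = 1%:M.
Proof.
apply: mulmx1C; have := nilpotent_subr_inv (strictly_upper_nilpotent basis_mx_strictly_upper).
by rewrite opprB addrC subrK.
Qed.

Lemma perm_jordan_basis : exists s : 'S_m,
  let T := col_perm s basis_mx in let Ti := row_perm s basis_inv in
  Ti *m T = 1%:M /\ superdiag01 (Ti *m M *m T).
Proof.
have [s s_sd] := superdiag01_perm_shift R (pivot_lt Mred Mnil) (pivot_inj Mred).
exists s; rewrite /= row_permE col_permE; split.
  by rewrite mulmxA -(mulmxA _ basis_inv) basis_invK mulmx1 -perm_mxM mulgV perm_mx1.
have conj : basis_inv *m M *m basis_mx = pivot_mx.
  by rewrite -mulmxA mulmx_basis mulmxA basis_invK mul1mx.
by move: s_sd; rewrite -/pivot_mx row_permE col_permE -conj !mulmxA.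
Qed.

End JordanBasis.

Lemma pred_sqr_leq_fact k : (k.-1 * k.-1 <= k`!)%N.
Proof. by case: k => // k; rewrite factS leq_mul // fact_geq. Qed.

Lemma ler_wpM_weXn2l (R : numDomainType) (c c' x : R) a b :
  0 <= c -> c <= c' -> 1 <= x -> (a <= b)%N -> c * x ^+ a <= c' * x ^+ b.
Proof.
move=> c_ge0 cc' x_ge1 ab; apply: ler_pM => //; first exact/exprn_ge0/(le_trans ler01).
exact: ler_weXn2l.
Qed.

Section Constants.
Variables (R : realType) (n : nat) (X0 : R).
Hypotheses (n_gt0 : (0 < n)%N) (X0_ge1 : 1 <= X0).

Lemma basis_bound_le : (n%:R * X0) ^+ n.-1 <= n%:R ^+ (n * n) * X0 ^+ n`!.
Proof.
rewrite exprMn; apply: ler_wpM_weXn2l; rewrite ?exprn_ge0 ?ler_weXn2l ?ler1n //.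
  by rewrite (leq_trans (leq_pred n)) // leq_pmulr.
exact: leq_trans (leq_pred n) (fact_geq n).
Qed.

Lemma basis_inv_bound_le :
  n%:R * (n%:R * (n%:R * X0) ^+ n.-1) ^+ n.-1 <= n%:R ^+ (n * n) * X0 ^+ n`!.
Proof.
have -> : n%:R * (n%:R * (n%:R * X0) ^+ n.-1) ^+ n.-1 =
    n%:R ^+ (n + n.-1 * n.-1) * X0 ^+ (n.-1 * n.-1) :> R.
  by rewrite !exprMn -!exprM !mulrA -exprS prednK // -exprD.
apply: ler_wpM_weXn2l; rewrite ?exprn_ge0 ?ler_weXn2l ?ler1n ?pred_sqr_leq_fact //.
by case: n n_gt0 => // k _; rewrite /= mulSn mulnS; lia.
Qed.

End Constants.

Section JordanBasisBound.
Variable R : realType.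
Local Notation C := (complex R).
Variables (m : nat) (M : 'M[C]_m).
Hypotheses (Mred : reduced_col_echelon M) (Mnil : is_nilpotent M).
Variables (n : nat) (X0 : R).
Hypotheses (n_gt0 : (0 < n)%N) (m_le : (m <= n)%N) (X0_ge1 : 1 <= X0).
Hypothesis M_bounded : mxbounded M X0.
Local Notation K := (n%:R * X0).

Lemma nX0_ge1 : 1 <= K.
Proof. by rewrite -[X in X <= _]mul1r ler_pM ?ler1n. Qed.

Lemma nX0_ge0 : 0 <= K.
Proof. exact: le_trans ler01 nX0_ge1. Qed.

Lemma chain_vec_bounded e (j : 'I_m) : mxbounded (chain_vec M e j) (K ^+ (m.-1 - j)).
Proof.
have delta_bounded i : mxbounded (delta_mx i 0 : 'cV[C]_m) (K ^+ (m.-1 - i)).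
  exact: mxbounded_le (mxbounded_delta R _ _) (exprn_ege1 _ nX0_ge1).
elim: e j => [|e IH] j /=; first exact: delta_bounded.
case pj: (pivot_col M j) => [x|] /=; last exact: delta_bounded.
have jx := pivot_lt Mred Mnil ((pivot_colP Mred _ _).1 pj).
apply: mxbounded_le (mxbounded_mul M_bounded (IH x)) _.
apply: le_trans (_ : _ <= K * K ^+ (m.-1 - x)) _.
  rewrite ler_wpM2r ?exprn_ge0 ?nX0_ge0 // ler_wpM2r ?ler_nat //.
  exact: le_trans ler01 X0_ge1.
by rewrite -exprS ler_weXn2l ?nX0_ge1 //; have := ltn_ord x; lia.
Qed.

Lemma basis_mx_bounded : mxbounded (basis_mx M) (K ^+ n.-1).
Proof.
move=> i j; rewrite mxE; apply: le_trans (chain_vec_bounded m j i 0) _.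
by rewrite ler_weXn2l ?nX0_ge1 //; lia.
Qed.

Lemma basis_inv_bounded :
  mxbounded (basis_inv M) (n%:R * (n%:R * K ^+ n.-1) ^+ n.-1).
Proof.
have nB_ge1 : 1 <= n%:R * K ^+ n.-1.
  by rewrite -[X in X <= _]mul1r ler_pM ?ler1n ?exprn_ege1 ?nX0_ge1.
have N_bounded : mxbounded (1%:M - basis_mx M) (K ^+ n.-1).
  move=> i j; have [ji|ij] := leqP j i.
    by rewrite basis_mx_strictly_upper // Normc.normc0 exprn_ge0 // nX0_ge0.
  rewrite !mxE; case: eqP => [ij_eq|_]; first by rewrite ij_eq ltnn in ij.
  by rewrite sub0r normcN; have := basis_mx_bounded i j; rewrite mxE.
apply: mxbounded_le (mxbounded_sum (fun e : 'I_m => mxbounded_exp e N_bounded)) _.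
apply: le_trans (_ : _ <= \sum_(e < m) (n%:R * K ^+ n.-1) ^+ n.-1) _.
  apply: ler_sum => e _; apply: le_trans (_ : _ <= (n%:R * K ^+ n.-1) ^+ e) _.
    apply: lerXn2r; rewrite ?nnegrE ?mulr_ge0 ?exprn_ge0 ?nX0_ge0 //.
    by rewrite ler_wpM2r ?exprn_ge0 ?nX0_ge0 ?ler_nat.
  by rewrite ler_weXn2l //; have := ltn_ord e; lia.
rewrite sumr_const card_ord -[X in X <= _]mulr_natl ler_wpM2r ?ler_nat //.
by rewrite exprn_ge0 // (le_trans ler01 nB_ge1).
Qed.

Lemma red_echelon_jordan_basis : exists TT : 'M[C]_m * 'M[C]_m,
  let c := n%:R ^+ (n * n) * X0 ^+ n`! in
  [/\ TT.2 *m TT.1 = 1%:M, superdiag01 (TT.2 *m M *m TT.1),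
       mxbounded TT.1 c & mxbounded TT.2 c].
Proof.
have [s [TiT TiMT]] := perm_jordan_basis Mred Mnil.
exists (col_perm s (basis_mx M), row_perm s (basis_inv M)).
split=> // i j; rewrite mxE.
  exact: le_trans (basis_mx_bounded _ _) (basis_bound_le n_gt0 X0_ge1).
exact: le_trans (basis_inv_bounded _ _) (basis_inv_bound_le n_gt0 X0_ge1).
Qed.

End JordanBasisBound.


Section BlockDiagonal.
Variable R : realType.
Local Notation C := (complex R).
Variables (k : nat) (p : 'I_k -> nat).

Lemma mxbounded_mxdiag (X : forall i, 'M[C]_(p i)) c :
  0 <= c -> (forall i, mxbounded (X i) c) -> mxbounded (mxdiag X) c.
Proof.
move=> c_ge0 Xc s t; have [->|[i [a [b [_ _ ->]]]]] := mxdiag_entry X s t.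
  by rewrite Normc.normc0.
exact: Xc.
Qed.

Lemma mxdiag_block_bounded (X : forall i, 'M[C]_(p i)) i :
  mxbounded (X i) (opnorm (mxdiag X)).
Proof. by move=> a b; rewrite -mxdiag_RankE; apply: mxbounded_opnorm. Qed.

Lemma opnorm_mxdiag_le n (X : forall i, 'M[C]_(p i)) c :
  (\sum_i p i)%N = n -> 0 <= c -> (forall i, mxbounded (X i) c) ->
  opnorm (mxdiag X) <= (n * n)%:R * c.
Proof. by move=> <- c_ge0 Xc; apply/opnorm_le_mxbounded/mxbounded_mxdiag. Qed.

Lemma mxdiag_nilpotent (X : forall i, 'M[C]_(p i)) i :
  is_nilpotent (mxdiag X) -> is_nilpotent (X i).
Proof.
case=> e Xe0; exists e; move: i; apply/eq_mxdiagP.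
by rewrite -mxdiagX mxdiag0.
Qed.

End BlockDiagonal.

Lemma mx_neq0_dim_gt0 (V : nmodType) m n (A : 'M[V]_(m, n)) : A != 0 -> (0 < m)%N.
Proof. by case: m A => // A; rewrite flatmx0 eqxx. Qed.

Lemma block_size_le k (p : 'I_k -> nat) n b : (\sum_(i < k) p i)%N = n -> (p b <= n)%N.
Proof. by move=> <-; rewrite (bigD1 b) //= leq_addr. Qed.

Theorem proposition6 (R : realType) (n : nat) :
  exists Cn : R,
  forall (k : nat) (p : 'I_k -> nat) (B : forall b : 'I_k, 'M[complex R]_(p b)),
    (\sum_(b < k) p b)%N = n ->
    let A := @mxdiag _ _ p B in
    A != 0 ->
    is_nilpotent A ->
    (forall b : 'I_k, reduced_col_echelon (B b)) ->
    exists T : forall b : 'I_k, 'M[complex R]_(p b),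
      let S := @mxdiag _ _ p T in
      [/\ S \in unitmx,
          opnorm S <= Cn * (1 + opnorm A) ^+ n`!,
          opnorm (invmx S) <= Cn * (1 + opnorm A) ^+ n`!
        & jordan_form (invmx S *m A *m S)].
Proof.
exists ((n * n)%:R * n%:R ^+ (n * n)) => k p B p_sum A A_neq0 A_nil B_red.
have n_gt0 : (0 < n)%N by rewrite -p_sum; apply: mx_neq0_dim_gt0 A_neq0.
have X0_ge1 : 1 <= 1 + opnorm A by rewrite lerDl opnorm_ge0.
have c_ge0 : 0 <= n%:R ^+ (n * n) * (1 + opnorm A) ^+ n`!.
  by rewrite mulr_ge0 ?exprn_ge0 // (le_trans ler01 X0_ge1).
have B_bounded b : mxbounded (B b) (1 + opnorm A).
  by apply: mxbounded_le (mxdiag_block_bounded B (i := b)) _; rewrite lerDr.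
have blocks b := red_echelon_jordan_basis (B_red b) (mxdiag_nilpotent b A_nil) n_gt0
  (block_size_le b p_sum) X0_ge1 (B_bounded b).
have [TT TT_spec] := fin_all_exists blocks.
exists (fun b => (TT b).1) => S.
have [S_unit S_inv] : S \in unitmx /\ invmx S = mxdiag (fun b => (TT b).2).
  by apply: mxdiag_inv => b; case: (TT_spec b).
rewrite S_inv -mulrA; split=> //.
- by apply: opnorm_mxdiag_le p_sum c_ge0 _ => b; case: (TT_spec b).
- by apply: opnorm_mxdiag_le p_sum c_ge0 _ => b; case: (TT_spec b).
rewrite /A /S !mxdiag_mul; apply/superdiag01_jordan_form/superdiag01_mxdiag => b.
by case: (TT_spec b).
Qed.
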